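(* Let $T\in V^+$ with $\operatorname{rank}_+(T)>r$, and let $X$ be a minimizer of $\|T-X\|$ over $X\in D_r^+$. Then $\operatorname{rank}_+(X)=r$.
   Context: For $i=1,\dots,d$, $V_i$ is a real vector space of dimension $n_i$ with a fixed basis; $V_i^+$ is the cone of vectors with nonnegative coordinates. $V=V_1\otimes\cdots\otimes V_d$ with induced basis and Hilbert–Schmidt (coordinate $\ell^2$) norm $\|\cdot\|$; $V^+$ is the set of tensors with nonnegative coordinates. $\operatorname{rank}_+(T)$ is the least $r$ with $T=\sum_{p=1}^r u_{1,p}\otimes\cdots\otimes u_{d,p}$, $u_{i,p}\in V_i^+$ (with $\operatorname{rank}_+(0)=0$); $D_r^+=\{X\in V^+:\operatorname{rank}_+(X)\le r\}$. *)

From HB Require Import structures.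
From mathcomp Require Import all_boot all_order all_algebra.
Set Implicit Arguments. Unset Strict Implicit. Unset Printing Implicit Defensive.
Import Order.TTheory GRing.Theory Num.Theory.
Local Open Scope ring_scope.

(* multi-indices of V = V_1 ⊗ ... ⊗ V_d, dim V_i = n i *)
Definition midx (d : nat) (n : 'I_d -> nat) : finType :=
  {dffun forall i : 'I_d, 'I_(n i)}.

(* tensors = coordinate arrays in the induced basis *)
Definition tensor (R : rcfType) (d : nat) (n : 'I_d -> nat) := midx n -> R.

Definition nonneg_tensor (R : rcfType) d (n : 'I_d -> nat) (T : tensor R n) : Prop :=
  forall idx, 0 <= T idx.

Definition hsnorm (R : rcfType) d (n : 'I_d -> nat) (T : tensor R n) : R :=
  Num.sqrt (\sum_(idx : midx n) T idx ^+ 2).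

(* Padding by zero terms makes
   "exactly r terms" equivalent to "at most r terms". *)
Definition nnrank_le (R : rcfType) d (n : 'I_d -> nat) (T : tensor R n) (r : nat) : Prop :=
  exists u : 'I_r -> forall i : 'I_d, 'I_(n i) -> R,
    (forall p i j, 0 <= u p i j) /\
    (forall idx : midx n, T idx = \sum_(p < r) \prod_(i < d) u p i (idx i)).

Definition is_nnrank (R : rcfType) d (n : 'I_d -> nat) (T : tensor R n) (k : nat) : Prop :=
  nnrank_le T k /\ (forall m, (m < k)%N -> ~ nnrank_le T m).

Definition in_Dr (R : rcfType) d (n : 'I_d -> nat) (r : nat) (X : tensor R n) : Prop :=
  nonneg_tensor X /\ nnrank_le X r.

From HB Require Import structures.
From mathcomp Require Import all_boot all_order all_algebra.
From mathcomp.algebra_tactics Require Import ring lra.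
Set Implicit Arguments. Unset Strict Implicit. Unset Printing Implicit Defensive.
Import Order.TTheory GRing.Theory Num.Theory.
Local Open Scope ring_scope.

(* If rank_+(X) < r, then X + c e_idx (c >= 0) and t X (0 <= t <= 1) stay in
   D_r^+.  Minimality of ||T - X|| along the first family forces T <= X
   entrywise; along the second it forces <T - X, X> >= 0.  Every term of that
   inner product is <= 0, so all vanish, hence T = X and rank_+(T) <= r. *)

Section SquaredDistance.
Variables (R : realFieldType) (I : finType).

Definition sqdist (f g : I -> R) : R := \sum_i (f i - g i) ^+ 2.

Lemma sqdist_ge0 (f g : I -> R) : 0 <= sqdist f g.
Proof. by apply: sumr_ge0 => i _; apply: sqr_ge0. Qed.

Lemma sqdist_bump (f g : I -> R) i0 c :
  sqdist f (fun i => g i + c * (i == i0)%:R)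
  = sqdist f g - (f i0 - g i0) ^+ 2 + (f i0 - g i0 - c) ^+ 2.
Proof.
rewrite /sqdist (bigD1 i0) //= [in RHS](bigD1 i0) //= eqxx mulr1.
have -> : \sum_(i | i != i0) (f i - (g i + c * (i == i0)%:R)) ^+ 2
        = \sum_(i | i != i0) (f i - g i) ^+ 2.
  by apply: eq_bigr => i /negbTE ->; rewrite mulr0 addr0.
ring.
Qed.

Lemma sqdist_scale (f g : I -> R) t :
  sqdist f (fun i => t * g i)
  = sqdist f g + (1 - t) * (2 * \sum_i (f i - g i) * g i
                            + (1 - t) * \sum_i g i ^+ 2).
Proof.
rewrite /sqdist !mulr_sumr -big_split mulr_sumr -big_split.
by apply: eq_bigr => i _ /=; ring.
Qed.

Lemma le_of_sqdist_bump (f g : I -> R) i0 :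
  (forall c, 0 <= c -> sqdist f g <= sqdist f (fun i => g i + c * (i == i0)%:R)) ->
  f i0 <= g i0.
Proof.
move=> min_bump; rewrite leNgt; apply/negP => lt_gf.
have := min_bump (f i0 - g i0); rewrite sqdist_bump subrr expr0n /=.
have : 0 < (f i0 - g i0) ^+ 2 by rewrite exprn_gt0 // subr_gt0.
by rewrite subr_ge0; lra.
Qed.

Lemma eq_of_cross_ge0 (f g : I -> R) :
  (forall i, 0 <= f i <= g i) -> 0 <= \sum_i (f i - g i) * g i -> f =1 g.
Proof.
move=> fg cross_ge0 i.
have term_le0 j : (f j - g j) * g j <= 0.
  by case/andP: (fg j) => f0 fgj; rewrite mulr_le0_ge0 ?subr_le0 ?(le_trans f0).
have term_ge0 : 0 <= (f i - g i) * g i.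
  apply: (le_trans cross_ge0); rewrite (bigD1 i) //= gerDl.
  by apply: sumr_le0 => j _; apply: term_le0.
have /eqP : (f i - g i) * g i = 0 by apply/eqP; rewrite eq_le term_le0.
rewrite mulf_eq0 subr_eq0 => /orP[/eqP // | /eqP g0].
by case/andP: (fg i) => f0 fg_i; apply/eqP; rewrite eq_le fg_i g0 f0.
Qed.

Lemma ge0_of_quadratic_ge0 (a b : R) : 0 <= b ->
  (forall s, 0 < s <= 1 -> 0 <= s * (2 * a + s * b)) -> 0 <= a.
Proof.
move=> b_ge0 quad_ge0; rewrite leNgt; apply/negP => a_lt0.
have ba_gt0 : 0 < b - a by lra.
pose s := - a / (b - a).
have s_gt0 : 0 < s by rewrite divr_gt0 ?oppr_gt0.
have sba : s * (b - a) = - a by rewrite divfK ?gt_eqF.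
have s_le1 : s <= 1 by rewrite -(ler_pM2r ba_gt0) sba mul1r; lra.
have := quad_ge0 s; rewrite s_gt0 s_le1 => /(_ isT).
have -> : 2 * a + s * b = a * (1 + s) + (a + s * (b - a)) by ring.
by rewrite sba subrr addr0 pmulr_rge0 // pmulr_lge0 ?addr_gt0 // leNgt a_lt0.
Qed.

End SquaredDistance.

Section NonnegRank.
Variables (R : rcfType) (d : nat) (n : 'I_d -> nat).
Implicit Types (X Y : tensor R n) (m k r : nat).

Lemma eq_nnrank_le X Y r : X =1 Y -> nnrank_le X r -> nnrank_le Y r.
Proof. by move=> eqXY [u [u_ge0 uX]]; exists u; split=> // idx; rewrite -eqXY. Qed.

Lemma nnrank_leD X Y m k :
  nnrank_le X m -> nnrank_le Y k -> nnrank_le (fun idx => X idx + Y idx) (m + k).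
Proof.
move=> [u [u_ge0 uX]] [w [w_ge0 wY]].
exists (fun p => match split p with inl q => u q | inr q => w q end); split.
  by move=> p i j; case: split.
move=> idx; rewrite big_split_ord uX wY.
by congr (_ + _); apply: eq_bigr => p _;
  [rewrite -[lshift _ _]/(unsplit (inl p)) | rewrite -[rshift _ _]/(unsplit (inr p))];
  rewrite unsplitK.
Qed.

Lemma nnrank_le_delta (idx0 : midx n) : nnrank_le (fun idx => (idx == idx0)%:R : R) 1.
Proof.
exists (fun _ i j => (j == idx0 i)%:R); split=> [p i j|idx]; first exact: ler0n.
rewrite big_ord1; case: eqP => [->|ne_idx]; first by rewrite big1 // => i _; rewrite eqxx.
have [i ne_i] : exists i, idx i != idx0 i.
  by apply/existsP; rewrite -negb_forall; apply/negP => /forallP eq_i;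
     apply: ne_idx; apply/ffunP => i; apply/eqP.
by rewrite (bigD1 i) //= (negbTE ne_i) mul0r.
Qed.

Variable i0 : 'I_d.

Lemma nnrank_le0 k : nnrank_le (fun _ : midx n => 0 : R) k.
Proof.
exists (fun _ _ _ => 0); split=> // idx.
by rewrite big1 // => p _; rewrite (bigD1 i0) //= mul0r.
Qed.

Lemma nnrank_le_leq X m r : (m <= r)%N -> nnrank_le X m -> nnrank_le X r.
Proof.
move=> le_mr Xm; rewrite -(subnKC le_mr).
by apply: eq_nnrank_le (nnrank_leD Xm (nnrank_le0 (r - m))) => idx; rewrite addr0.
Qed.

Lemma nnrank_leZ X r c : 0 <= c -> nnrank_le X r -> nnrank_le (fun idx => c * X idx) r.
Proof.
move=> c_ge0 [u [u_ge0 uX]].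
exists (fun p i j => (if i == i0 then c else 1) * u p i j); split.
  by move=> p i j; rewrite mulr_ge0 //; case: eqP.
move=> idx; rewrite uX mulr_sumr; apply: eq_bigr => p _.
by rewrite big_split /= -big_mkcond big_pred1_eq.
Qed.

End NonnegRank.

Lemma nnrank_le_dim0 (R : rcfType) (n : 'I_0 -> nat) (X : tensor R n) k m :
  nnrank_le X k -> nnrank_le X m -> k = m.
Proof.
have idx : midx n by apply: finfun => - [].
have X_const l : nnrank_le X l -> X idx = l%:R.
  case=> u [_ uX]; rewrite uX (eq_bigr (fun _ => 1)) => [|p _]; last by rewrite big_ord0.
  by rewrite sumr_const card_ord.
by move=> /X_const Xk /X_const; rewrite Xk => /eqP; rewrite eqr_nat => /eqP.
Qed.

Lemma nnrank_deficient_best_approx_eq (R : rcfType) (d : nat) (n : 'I_d -> nat)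
    (i0 : 'I_d) (T X : tensor R n) m r :
  nonneg_tensor T -> nonneg_tensor X -> nnrank_le X m -> (m < r)%N ->
  (forall Y, in_Dr r Y -> sqdist T X <= sqdist T Y) -> T =1 X.
Proof.
move=> T_ge0 X_ge0 Xm lt_mr X_min.
have T_le_X idx0 : T idx0 <= X idx0.
  apply: le_of_sqdist_bump => c c_ge0; apply: X_min; split.
    by move=> idx; rewrite addr_ge0 ?mulr_ge0 ?ler0n.
  apply: (@nnrank_le_leq _ _ _ i0 _ (m + 1)); first by rewrite addn1.
  exact (nnrank_leD Xm (nnrank_leZ i0 c_ge0 (nnrank_le_delta R idx0))).
have cross_ge0 : 0 <= \sum_idx (T idx - X idx) * X idx.
  apply: (@ge0_of_quadratic_ge0 _ _ (\sum_idx X idx ^+ 2)).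
    by apply: sumr_ge0 => idx _; apply: sqr_ge0.
  move=> s /andP[_ s_le1].
  have := X_min (fun idx => (1 - s) * X idx); rewrite sqdist_scale subKr lerDl; apply.
  have scale_ge0 : 0 <= 1 - s by rewrite subr_ge0.
  split=> [idx|]; first exact: mulr_ge0.
  exact (nnrank_leZ i0 scale_ge0 (nnrank_le_leq i0 (ltnW lt_mr) Xm)).
by apply: eq_of_cross_ge0 cross_ge0 => idx; rewrite T_ge0 T_le_X.
Qed.

Theorem mainTheorem5 (R : rcfType) (d : nat) (n : 'I_d -> nat) (r : nat)
  (T X : tensor R n) :
  nonneg_tensor T ->
  ~ nnrank_le T r ->
  in_Dr r X ->
  (forall Y : tensor R n, in_Dr r Y ->
     hsnorm (fun idx => T idx - X idx) <= hsnorm (fun idx => T idx - Y idx)) ->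
  is_nnrank X r.
Proof.
move=> T_ge0 T_rank [X_ge0 Xr] X_min; split=> // m lt_mr Xm.
have {X_min} X_sqmin Y : in_Dr r Y -> sqdist T X <= sqdist T Y.
  by move=> /X_min; rewrite /hsnorm ler_sqrt ?sqdist_ge0.
case: d => [|d] in n T X T_ge0 T_rank X_ge0 Xr Xm X_sqmin *.
  by rewrite (nnrank_le_dim0 Xr Xm) ltnn in lt_mr.
have T_eq_X := nnrank_deficient_best_approx_eq ord0 T_ge0 X_ge0 Xm lt_mr X_sqmin.
by apply: T_rank; apply: eq_nnrank_le Xr => idx; rewrite T_eq_X.
Qed.
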